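(* Let $q\ge1$ and $t$ be integers with $0\le t<q$, and let $\mathcal{C}_{q,t}^{\mathrm{base}}=\bigcup_{i=0}^{\lfloor (q-t-1)/(t+1)\rfloor}\mathcal{S}_{q-t-i(t+1)}^q.$ Then: (a) for every $1\le j\le t!$, the code $\big(\mathcal{S}_{\mathrm{ins}}^t(\mathcal{C}_{q,t}^{\mathrm{base}})\big)_j$ is a $t$-tail-deletion-correcting code and $\big|\big(\mathcal{S}_{\mathrm{ins}}^t(\mathcal{C}_{q,t}^{\mathrm{base}})\big)_j\big|=|\mathcal{C}_{q,t}^{\mathrm{base}}|=q!\sum_{i=0}^{\lfloor (q-t-1)/(t+1)\rfloor}\frac{1}{(t+i(t+1))!};$ (b) for every $1\le j_1<j_2\le t!$, the codes $\big(\mathcal{S}_{\mathrm{ins}}^t(\mathcal{C}_{q,t}^{\mathrm{base}})\big)_{j_1}$ and $\big(\mathcal{S}_{\mathrm{ins}}^t(\mathcal{C}_{q,t}^{\mathrm{base}})\big)_{j_2}$ are disjoint; (c) if $q\not\equiv 0 \pmod{t+1}$, then $\big(\mathcal{S}_{\mathrm{ins}}^t(\mathcal{C}_{q,t}^{\mathrm{base}})\big)_1\cup\mathcal{S}_1^q$ is a $t$-tail-deletion-correcting code.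
   Context: Let $[q]=\{0,1,\dots,q-1\}$. For $1\le m\le q$, a partial permutation of length $m$ over $[q]$ is a sequence $\pi=(\pi_1,\dots,\pi_m)$ of $m$ pairwise distinct elements of $[q]$; $|\pi|=m$. Let $\mathcal{S}_m^q$ be the set of those of length $m$ and $\mathcal{S}_{\mathrm{all}}^q=\bigcup_{m=1}^{q}\mathcal{S}_m^q$. A code is any subset of $\mathcal{S}_{\mathrm{all}}^q$. Juxtaposition $\omega\pi$ denotes concatenation with $\omega$ on the left. For $\pi$ of length $m$ and integer $j\ge 0$, $\pi_{\downarrow j}=(\pi_{k+1},\dots,\pi_m)$ with $k=\min(j,m-1)$ (leftmost symbols are deleted; the last symbol is never deleted); $\mathcal{B}_{\mathrm{del}}^t(\pi)=\{\pi_{\downarrow j}:0\le j\le t\}$. A code $\mathcal{C}$ is $t$-tail-deletion-correcting if $\mathcal{B}_{\mathrm{del}}^t(\pi_1)\cap\mathcal{B}_{\mathrm{del}}^t(\pi_2)=\emptyset$ for all distinct $\pi_1,\pi_2\in\mathcal{C}$. For $\pi\in\mathcal{S}_{\mathrm{all}}^q$, $\mathcal{S}_{\mathrm{ins}}^t(\pi)$ is the set of all $\omega\pi\in\mathcal{S}_{\mathrm{all}}^q$ with $\omega$ a sequence of exactly $t$ elements of $[q]$ (entries of $\omega\pi$ pairwise distinct); if $|\pi|\le q-t$ it has $\binom{q-|\pi|}{t}t!$ elements. Its elements are listed in increasing lexicographic order and $(\mathcal{S}_{\mathrm{ins}}^t(\pi))_j$ denotes the $j$-th one. For a code $\mathcal{C}$,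 $(\mathcal{S}_{\mathrm{ins}}^t(\mathcal{C}))_j=\{(\mathcal{S}_{\mathrm{ins}}^t(\pi))_j:\pi\in\mathcal{C}\}$. *)

(* Partial permutations over [q] = {0..q-1} are represented as
   sequences of naturals; codes are finite lists of such sequences (set
   membership = list membership, cardinality = size of the deduplicated list). *)
From mathcomp Require Import all_boot all_order all_algebra.
Set Implicit Arguments. Unset Strict Implicit. Unset Printing Implicit Defensive.

Fixpoint allseqs (q m : nat) : seq (seq nat) :=
  if m is m'.+1 then [seq x :: s | x <- iota 0 q, s <- allseqs q m'] else [:: [::]].

Definition Sm (q m : nat) : seq (seq nat) := [seq s <- allseqs q m | uniq s].

Fixpoint lexle (s1 s2 : seq nat) : bool :=
  match s1, s2 with
  | [::], _ => true
  | _ :: _, [::] => false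
  | x :: s1', y :: s2' => (x < y) || ((x == y) && lexle s1' s2')
  end.

Definition S_ins (q t : nat) (pi : seq nat) : seq (seq nat) :=
  sort lexle [seq w ++ pi | w <- allseqs q t & uniq (w ++ pi)].

(* (S_ins^t(pi))_j, 1-indexed *)
Definition S_ins_j (q t j : nat) (pi : seq nat) : seq nat :=
  nth [::] (S_ins q t pi) j.-1.

Definition S_ins_code (q t j : nat) (C : seq (seq nat)) : seq (seq nat) :=
  [seq S_ins_j q t j pi | pi <- C].

Definition tail_del (j : nat) (pi : seq nat) : seq nat :=
  drop (minn j (size pi).-1) pi.

Definition B_del (t : nat) (pi : seq nat) : seq (seq nat) :=
  [seq tail_del j pi | j <- iota 0 t.+1].

Definition tdc (t : nat) (C : seq (seq nat)) : Prop :=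
  forall p1 p2, p1 \in C -> p2 \in C -> p1 != p2 ->
    forall s, s \in B_del t p1 -> s \in B_del t p2 -> False.

Definition card_code (C : seq (seq nat)) : nat := size (undup C).

Definition C_base (q t : nat) : seq (seq nat) :=
  flatten [seq Sm q (q - t - i * t.+1) | i <- iota 0 ((q - t - 1) %/ t.+1).+1].

From mathcomp Require Import all_boot all_order all_algebra.
From mathcomp Require Import zify.
Import GRing.Theory Num.Theory.

(* Prepending t symbols to a base word of length q - t - i(t+1) gives a word
   of length q - i(t+1): all codewords are longer than t and their lengths are
   congruent modulo t+1.  Deleting k <= t leftmost symbols only shortens a word
   by k, so two codewords with a common deletion result have equal lengths,
   hence the same k, hence the same tail after t deletions, which is the base
   word; and the j-th element of S_ins^t(pi) determines pi.  For (c), a base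
   word of length 1 would force t+1 | q, so codewords then have length at
   least t+2 and their deletions never reach length 1. *)

Lemma mem_allseqs q m s : s \in allseqs q m -> size s = m /\ all (gtn q) s.
Proof.
elim: m s => [|m IHm] s /=; first by rewrite inE => /eqP ->.
case/allpairsPdep=> x [w [+ /IHm[<- ltw] ->]].
by rewrite mem_iota /= ltw andbT.
Qed.

Lemma allseqs_uniq q m : uniq (allseqs q m).
Proof.
elim: m => [|m IHm] //=; apply: allpairs_uniq => //; first exact: iota_uniq.
by move=> [x w] [y v] _ _ /= [-> ->].
Qed.

Lemma count_notin_iota q A : uniq A -> all (gtn q) A ->
  count (predC (mem A)) (iota 0 q) = q - size A.
Proof.
move=> uA ltA; have inA : count (mem A) (iota 0 q) = size A.
  rewrite -size_filter; apply/perm_size/uniq_perm => [||x] //.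
    by rewrite filter_uniq ?iota_uniq.
  rewrite mem_filter mem_iota /=; case xA: (x \in A) => //=.
  exact: (allP ltA).
by have := count_predC (mem A) (iota 0 q); rewrite inA size_iota; lia.
Qed.

Lemma count_uniq_cat_allseqs q t A : uniq A -> all (gtn q) A ->
  count (fun w => uniq (w ++ A)) (allseqs q t) = (q - size A) ^_ t.
Proof.
elim: t A => [|t IHt] A uA ltA; first by rewrite /= uA.
have count_cons x : x \in iota 0 q ->
    count (fun w => uniq (w ++ A)) [seq x :: w | w <- allseqs q t]
    = (x \notin A) * (q - size A).-1 ^_ t.
  rewrite mem_iota /= count_map => ltx.
  rewrite (eq_count (a2 := fun w => uniq (w ++ x :: A))); last first.
    by move=> w; apply/perm_uniq/permPl/(perm_catCA [:: x] w A).
  case: (boolP (x \in A)) => xA /=.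
    rewrite mul0n -(count_pred0 (allseqs q t)); apply: eq_count => w.
    by rewrite cat_uniq /= xA !andbF.
  by rewrite IHt /= ?xA ?uA ?ltx ?subnS ?mul1n.
rewrite /= /allpairs_dep count_flatten sumnE !big_map (eq_big_seq _ count_cons).
rewrite -big_distrl /=.
have -> : \sum_(x <- iota 0 q) (x \notin A) = q - size A.
  by rewrite -count_notin_iota // -sum1_count [RHS]big_mkcond.
by rewrite -ffactnS.
Qed.

Lemma mem_Sm q m s : s \in Sm q m -> [/\ uniq s, size s = m & all (gtn q) s].
Proof. by rewrite mem_filter => /andP[us /mem_allseqs[-> ltq]]. Qed.

Lemma Sm_uniq q m : uniq (Sm q m).
Proof. exact/filter_uniq/allseqs_uniq. Qed.

Lemma size_Sm q m : size (Sm q m) = q ^_ m.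
Proof.
rewrite size_filter -[q in RHS]subn0 -(@count_uniq_cat_allseqs q m [::] isT isT).
by apply: eq_count => s; rewrite cats0.
Qed.

Lemma mem_S_ins q t p s : s \in S_ins q t p -> exists2 w, size w = t & s = w ++ p.
Proof.
rewrite mem_sort => /mapP[w]; rewrite mem_filter => /andP[_ /mem_allseqs[<- _]] ->.
by exists w.
Qed.

Lemma S_ins_uniq q t p : uniq (S_ins q t p).
Proof.
rewrite sort_uniq map_inj_in_uniq ?filter_uniq ?allseqs_uniq // => w v.
rewrite !mem_filter => /andP[_ /mem_allseqs[sw _]] /andP[_ /mem_allseqs[sv _]] /eqP.
by rewrite eqseq_cat ?sw ?sv // => /andP[/eqP].
Qed.

Lemma size_S_ins q t p : uniq p -> all (gtn q) p -> size (S_ins q t p) = (q - size p) ^_ t.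
Proof. by move=> up ltp; rewrite size_sort size_map size_filter count_uniq_cat_allseqs. Qed.

Lemma S_ins_index_bound q t j p : uniq p -> all (gtn q) p -> size p + t <= q ->
  0 < j <= t`! -> j.-1 < size (S_ins q t p).
Proof.
move=> up ltp fit /andP[j_gt0 le_j]; rewrite size_S_ins // -bin_ffact.
have bin_pos : 0 < 'C(q - size p, t) by rewrite bin_gt0; lia.
by apply: leq_trans (leq_pmull _ bin_pos); lia.
Qed.

Lemma S_ins_j_cat [q t j p] : uniq p -> all (gtn q) p -> size p + t <= q ->
  0 < j <= t`! -> exists2 w, size w = t & S_ins_j q t j p = w ++ p.
Proof. by move=> up ltp fit jt; apply/mem_S_ins/mem_nth/S_ins_index_bound. Qed.

Lemma tail_del_drop k p : k < size p -> tail_del k p = drop k p.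
Proof. by move=> ltk; rewrite /tail_del; congr drop; lia. Qed.

Lemma mem_B_del_long [t p s] :
  t < size p -> s \in B_del t p -> exists2 k, k <= t & s = drop k p.
Proof.
move=> ltp /mapP[k]; rewrite mem_iota ltnS => /andP[_ le_k] ->.
by exists k; rewrite // tail_del_drop //; lia.
Qed.

Lemma mem_B_del_short [t p s] : size p <= 1 -> s \in B_del t p -> s = p.
Proof.
move=> le_p /mapP[k _ ->].
by rewrite /tail_del (_ : (size p).-1 = 0) ?minn0 ?drop0 //; lia.
Qed.

Lemma eqmod_eq_close d m n k l :
  m = n %[mod d.+1] -> m + k = n + l -> k <= d -> l <= d -> m = n.
Proof.
wlog le_mn : m n k l / m <= n => [hwlog|].
  case: (leqP m n) => [|/ltnW] le; first exact: hwlog.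
  by move=> *; symmetry; apply: (hwlog n m l k).
move=> /eqP; rewrite eq_sym eqn_mod_dvd // => dvd_d eq_sum le_k le_l.
by case: (posnP (n - m)) => [|/dvdn_leq/(_ dvd_d)]; lia.
Qed.

Lemma tdc_drop_inj t C :
  {in C, forall p, t < size p} ->
  {in C &, forall p1 p2, size p1 = size p2 %[mod t.+1]} ->
  {in C &, injective (drop t)} -> tdc t C.
Proof.
move=> long eqmod inj p1 p2 C1 C2 /negP ne s.
have [lt1 lt2] := (long _ C1, long _ C2).
move=> /(mem_B_del_long lt1)[k1 le1 ->] /(mem_B_del_long lt2)[k2 le2] eq_drop.
have := congr1 size eq_drop; rewrite !size_drop => eq_len.
have eq_size : size p1 = size p2.
  by apply: (@eqmod_eq_close t _ _ k2 k1) => //; [exact: eqmod | lia].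
have eq_k : k1 = k2 by lia.
apply/ne/eqP/inj => //.
by rewrite -(subnK le1) -drop_drop eq_drop eq_k drop_drop subnK // -eq_k.
Qed.

Lemma tdc_cat_short t C D : tdc t C ->
  {in C, forall p, t.+1 < size p} -> {in D, forall p, size p <= 1} -> tdc t (C ++ D).
Proof.
move=> tdcC long short p1 p2; rewrite !mem_cat.
have cross p p' s : p \in C -> p' \in D -> s \in B_del t p -> s \in B_del t p' -> False.
  move=> Cp Dp' /(mem_B_del_long (ltnW (long _ Cp)))[k le_k ->].
  move/(mem_B_del_short (short _ Dp'))/(congr1 size); rewrite size_drop.
  by have := long _ Cp; have := short _ Dp'; lia.
case/orP=> [C1|D1] /orP[C2|D2] ne s B1 B2.
- exact: (tdcC p1 p2 C1 C2 ne s).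
- exact: (cross p1 p2 s).
- exact: (cross p2 p1 s).
by move: ne; rewrite -(mem_B_del_short (short _ D1) B1) (mem_B_del_short (short _ D2) B2) eqxx.
Qed.

Lemma flatten_map_uniq (I T : eqType) (F : I -> seq T) (s : seq I) :
  uniq s -> {in s, forall i, uniq (F i)} ->
  {in s &, forall i j x, x \in F i -> x \in F j -> i = j} ->
  uniq (flatten (map F s)).
Proof.
elim: s => //= i s IHs /andP[s'i us] uF disjF.
have sub_s : {subset s <= i :: s} by move=> k sk; rewrite inE sk orbT.
rewrite cat_uniq uF ?mem_head //= IHs //; last 2 first.
- by move=> k /sub_s; apply: uF.
- by move=> k l /sub_s sk /sub_s; apply: disjF.
rewrite andbT; apply/hasP=> -[x /flattenP[_ /mapP[j sj ->] xFj] xFi].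
have eq_ij : i = j by apply: (disjF i j) xFi xFj; rewrite ?mem_head ?sub_s.
by move: s'i; rewrite eq_ij sj.
Qed.

Section BaseCode.

Variables q t : nat.
Hypothesis lt_tq : t < q.

Local Notation K := ((q - t - 1) %/ t.+1).
Local Notation code j := (S_ins_code q t j (C_base q t)).

Lemma C_base_index_bound i : i \in iota 0 K.+1 -> i * t.+1 <= q - t - 1.
Proof. by rewrite mem_iota ltnS leq_divRL. Qed.

Lemma mem_C_base [p] : p \in C_base q t ->
  [/\ uniq p, all (gtn q) p, 0 < size p, size p + t <= q & size p + t = q %[mod t.+1]].
Proof.
case/flattenP=> _ /mapP[i + ->] /mem_Sm[up -> ltp].
move=> /C_base_index_bound le_i; split=> //; try lia.
by rewrite -[q in RHS](_ : i * t.+1 + (q - t - i * t.+1 + t) = q) ?modnMDl //; lia.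
Qed.

Lemma C_base_uniq : uniq (C_base q t).
Proof.
apply: flatten_map_uniq => [|m _|i j]; [exact: iota_uniq | exact: Sm_uniq |].
move=> /C_base_index_bound le_i /C_base_index_bound le_j p.
move=> /mem_Sm[_ sz_i _] /mem_Sm[_ sz_j _].
by apply/eqP; rewrite -(eqn_pmul2r (ltn0Sn t)); apply/eqP; lia.
Qed.

Lemma card_C_base :
  ((card_code (C_base q t))%:R : rat) =
    (\sum_(i < K.+1) ((q`!)%:R / ((t + i * t.+1)`!)%:R))%R.
Proof.
rewrite /card_code undup_id ?C_base_uniq // size_flatten /shape -map_comp.
rewrite sumnE big_map natr_sum.
rewrite -(big_mkord xpredT (fun i => (q`!)%:R / ((t + i * t.+1)`!)%:R))%R /index_iota subn0.
apply: eq_big_seq => i /C_base_index_bound le_i.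
have le_q : q - t - i * t.+1 <= q by lia.
rewrite /= size_Sm -(ffact_fact le_q) (_ : q - (q - t - i * t.+1) = t + i * t.+1); last lia.
by rewrite natrM mulfK // pnatr_eq0 -lt0n fact_gt0.
Qed.

Lemma S_ins_j_C_base [j pi] : 0 < j <= t`! -> pi \in C_base q t ->
  drop t (S_ins_j q t j pi) = pi /\ size (S_ins_j q t j pi) = t + size pi.
Proof.
move=> j_range /mem_C_base[up ltp _ fit _].
have [w sz_w ->] := S_ins_j_cat up ltp fit j_range.
by rewrite drop_size_cat // size_cat sz_w.
Qed.

Lemma code_tdc j : 0 < j <= t`! -> tdc t (code j).
Proof.
move=> j_range; apply: tdc_drop_inj.
- move=> _ /mapP[pi Cpi ->]; have [_ ->] := S_ins_j_C_base j_range Cpi.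
  by have [_ _ ? _ _] := mem_C_base Cpi; lia.
- move=> _ _ /mapP[pi1 C1 ->] /mapP[pi2 C2 ->].
  have [_ ->] := S_ins_j_C_base j_range C1; have [_ ->] := S_ins_j_C_base j_range C2.
  have [_ _ _ _ m1] := mem_C_base C1; have [_ _ _ _ m2] := mem_C_base C2.
  by rewrite !(addnC t) m1 m2.
- move=> _ _ /mapP[pi1 C1 ->] /mapP[pi2 C2 ->] eq_drop.
  by rewrite -(S_ins_j_C_base j_range C1).1 eq_drop (S_ins_j_C_base j_range C2).1.
Qed.

Lemma card_code_S_ins j : 0 < j <= t`! -> card_code (code j) = card_code (C_base q t).
Proof.
move=> j_range; rewrite /card_code !undup_id ?size_map ?C_base_uniq //.
rewrite (map_inj_in_uniq (can_in_inj (g := drop t) _)) ?C_base_uniq //.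
by move=> pi /(S_ins_j_C_base j_range)[].
Qed.

Lemma code_disjoint j1 j2 : 0 < j1 -> j1 < j2 -> j2 <= t`! ->
  forall s, s \in code j1 -> s \in code j2 -> False.
Proof.
move=> j1_gt0 lt_j12 j2_le s /mapP[pi1 C1 ->] /mapP[pi2 C2 eq_s].
have j1_range : 0 < j1 <= t`! by rewrite j1_gt0; lia.
have j2_range : 0 < j2 <= t`! by rewrite j2_le; lia.
have eq_pi : pi1 = pi2.
  by rewrite -(S_ins_j_C_base j1_range C1).1 eq_s (S_ins_j_C_base j2_range C2).1.
have [up ltp _ fit _] := mem_C_base C1; move: eq_s; rewrite -eq_pi /S_ins_j.
move/eqP; rewrite nth_uniq ?S_ins_uniq ?S_ins_index_bound //; lia.
Qed.

Lemma code_size_gt j p : 0 < j <= t`! -> ~~ (t.+1 %| q) -> p \in code j -> t.+1 < size p.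
Proof.
move=> j_range ndvd /mapP[pi Cpi ->]; have [_ ->] := S_ins_j_C_base j_range Cpi.
have [_ _ pos _ eqm] := mem_C_base Cpi.
case: (size pi) pos eqm => [|[|n]] //; last by lia.
by move=> _ eqm; case/negP: ndvd; rewrite /dvdn -eqm add1n modnn.
Qed.

End BaseCode.

Theorem mainTheorem9 (q t : nat) (hq : 1 <= q) (htq : t < q) :
  (forall j, 1 <= j <= t`! ->
     tdc t (S_ins_code q t j (C_base q t)) /\
     card_code (S_ins_code q t j (C_base q t)) = card_code (C_base q t) /\
     ((card_code (C_base q t))%:R : rat) =
       (\sum_(i < ((q - t - 1) %/ t.+1).+1)
          ((q`!)%:R / ((t + i * t.+1)`!)%:R))%R) /\
  (forall j1 j2, 1 <= j1 -> j1 < j2 -> j2 <= t`! ->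
     forall s, s \in S_ins_code q t j1 (C_base q t) ->
               s \in S_ins_code q t j2 (C_base q t) -> False) /\
  (~~ (t.+1 %| q) -> tdc t (S_ins_code q t 1 (C_base q t) ++ Sm q 1)).
Proof.
split; last split.
- move=> j j_range; split; first exact: code_tdc.
  by split; [exact: card_code_S_ins | exact: card_C_base].
- exact: code_disjoint.
- move=> ndvd; have one_range : 0 < 1 <= t`! by rewrite fact_gt0.
  apply: tdc_cat_short; first exact: code_tdc.
  + by move=> p; apply: code_size_gt.
  + by move=> p /mem_Sm[_ -> _].
Qed.
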